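(* Let $\widehat B\in\mathbb R^K$ be fixed and define, for $\widehat U=(\widehat h,\widehat{q^x},\widehat{q^y})\in\mathbb R^{3K}$ with $\mathcal P(\widehat h)$ invertible, $$E(\widehat U)=\tfrac12\big((\widehat{q^x})^\top\widehat u+(\widehat{q^y})^\top\widehat v\big)+\tfrac12 g\|\widehat h\|^2+g\,\widehat h^\top\widehat B,\qquad \widehat u=\mathcal P^{-1}(\widehat h)\widehat{q^x},\ \widehat v=\mathcal P^{-1}(\widehat h)\widehat{q^y}.$$ If $\mathcal P(\widehat h)$ is positive definite, then $E$ is convex in $\widehat U$.
   Context: Let $\xi$ be a random variable in $\mathbb R^d$ with density $\rho$ having finite moments of all orders, and let $\phi_1\equiv1,\phi_2,\dots,\phi_K$ be polynomials orthonormal in $L^2_\rho$. For $k=1,\dots,K$ let $\mathcal M_k\in\mathbb R^{K\times K}$ with $(\mathcal M_k)_{l,m}=\int\phi_k\phi_l\phi_m\rho$, and for $\widehat z\in\mathbb R^K$ set $\mathcal P(\widehat z)=\sum_{k=1}^K\widehat z_k\mathcal M_k$. $g>0$ is a constant. Convexity is understood on the (convex) set of $\widehat U$ with $\mathcal P(\widehat h)$ positive definite. *)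

From HB Require Import structures.
From mathcomp Require Import all_boot all_order all_algebra.
From mathcomp Require Import all_classical all_reals all_analysis.
Set Implicit Arguments. Unset Strict Implicit. Unset Printing Implicit Defensive.
Import Order.TTheory GRing.Theory Num.Theory.
Local Open Scope ring_scope.

Definition monomial (R : realType) (d : nat) (e : 'I_d -> nat) (x : 'rV[R]_d) : R :=
  \prod_(j < d) x ord0 j ^+ e j.

Definition is_polyfun (R : realType) (d : nat) (f : 'rV[R]_d -> R) : Prop :=
  exists (n : nat) (c : 'I_n -> R) (e : 'I_n -> 'I_d -> nat),
    forall x, f x = \sum_(i < n) c i * monomial (e i) x.

Definition posdef (R : realType) (K : nat) (A : 'M[R]_K) : Prop :=
  A^T = A /\ forall x : 'cV[R]_K, x != 0 -> 0 < (x^T *m A *m x) ord0 ord0.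

Definition Mtens (R : realType) (d0 : measure_display) (T : measurableType d0)
  (P : probability T R) (d K : nat) (xi : T -> 'rV[R]_d)
  (phi : 'I_K -> 'rV[R]_d -> R) (k : 'I_K) : 'M[R]_K :=
  \matrix_(l < K, m < K)
    Rintegral P setT (fun w => phi k (xi w) * phi l (xi w) * phi m (xi w)).

Definition Pmat (R : realType) (d0 : measure_display) (T : measurableType d0)
  (P : probability T R) (d K : nat) (xi : T -> 'rV[R]_d)
  (phi : 'I_K -> 'rV[R]_d -> R) (z : 'cV[R]_K) : 'M[R]_K :=
  \sum_(k < K) z k ord0 *: Mtens P xi phi k.

Definition energy (R : realType) (d0 : measure_display) (T : measurableType d0)
  (P : probability T R) (d K : nat) (xi : T -> 'rV[R]_d)
  (phi : 'I_K -> 'rV[R]_d -> R) (g : R) (B h qx qy : 'cV[R]_K) : R :=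
  let u := invmx (Pmat P xi phi h) *m qx in
  let v := invmx (Pmat P xi phi h) *m qy in
  2^-1 * ((qx^T *m u) ord0 ord0 + (qy^T *m v) ord0 ord0)
  + 2^-1 * g * (h^T *m h) ord0 ord0 + g * (h^T *m B) ord0 ord0.

From HB Require Import structures.
From mathcomp Require Import all_boot all_order all_algebra.
From mathcomp Require Import all_classical all_reals all_analysis.
From mathcomp Require Import ring lra.
Import Order.TTheory GRing.Theory Num.Theory.
Set Implicit Arguments. Unset Strict Implicit.
Local Open Scope ring_scope.

(* The energy is [1/2 F(P(h), qx) + 1/2 F(P(h), qy)] plus a convex quadratic
   in [h], where [F(A, q) = q^T A^-1 q] and [h |-> P(h)] is linear.  On
   positive definite [A], [F(A, q) = max_x (2 x^T q - x^T A x)], with the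
   maximum attained at [x = A^-1 q]; as a supremum of functions affine in
   [(A, q)], [F] is jointly convex. *)

Section DotProduct.
Variables (R : comNzRingType) (n : nat).
Implicit Types (x y z : 'cV[R]_n) (A : 'M[R]_n).

Definition vdot x y : R := (x^T *m y) 0 0.

Lemma vdotE x y : vdot x y = \sum_i x i 0 * y i 0.
Proof. by rewrite /vdot mxE; apply: eq_bigr => i _; rewrite mxE. Qed.

Lemma vdotC x y : vdot x y = vdot y x.
Proof. by rewrite !vdotE; apply: eq_bigr => i _; rewrite mulrC. Qed.

Lemma vdotDl x y z : vdot (x + y) z = vdot x z + vdot y z.
Proof. by rewrite /vdot linearD mulmxDl mxE. Qed.

Lemma vdotZl a x y : vdot (a *: x) y = a * vdot x y.
Proof. by rewrite /vdot linearZ -scalemxAl mxE. Qed.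

Lemma vdotNl x y : vdot (- x) y = - vdot x y.
Proof. by rewrite -scaleN1r vdotZl mulN1r. Qed.

Lemma vdotDr x y z : vdot z (x + y) = vdot z x + vdot z y.
Proof. by rewrite vdotC vdotDl !(vdotC z). Qed.

Lemma vdotZr a x y : vdot y (a *: x) = a * vdot y x.
Proof. by rewrite vdotC vdotZl vdotC. Qed.

Lemma vdotNr x y : vdot y (- x) = - vdot y x.
Proof. by rewrite vdotC vdotNl vdotC. Qed.

Lemma vdot_mulmxr x A y : vdot x (A *m y) = vdot (A^T *m x) y.
Proof. by rewrite /vdot trmx_mul trmxK mulmxA. Qed.

End DotProduct.

Lemma vdot_ge0 (R : realDomainType) n (x : 'cV[R]_n) : 0 <= vdot x x.
Proof. by rewrite vdotE; apply: sumr_ge0 => i _; rewrite -expr2 sqr_ge0. Qed.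

Lemma vdotxx_convex (R : realDomainType) n (x y : 'cV[R]_n) t : 0 <= t <= 1 ->
  vdot (t *: x + (1 - t) *: y) (t *: x + (1 - t) *: y)
  <= t * vdot x x + (1 - t) * vdot y y.
Proof.
move=> /andP[t0 t1]; have := vdot_ge0 (x - y).
rewrite !(vdotDl, vdotDr, vdotZl, vdotZr, vdotNl, vdotNr) (vdotC y x).
have : 0 <= t * (1 - t) by rewrite mulr_ge0 // subr_ge0.
nra.
Qed.

Section PositiveDefinite.
Variables (R : realType) (n : nat).
Implicit Types (x q : 'cV[R]_n) (A : 'M[R]_n).

Definition mxfrac A q : R := vdot q (invmx A *m q).

Lemma posdef_vdot_ge0 A x : posdef A -> 0 <= vdot x (A *m x).
Proof.
move=> [_ A_pos]; have [->|x_neq0] := eqVneq x 0.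
  by rewrite vdotE big1 // => i _; rewrite mxE mul0r.
by rewrite /vdot mulmxA ltW // A_pos.
Qed.

Lemma posdef_unitmx A : posdef A -> A \in unitmx.
Proof.
move=> [_ A_pos]; rewrite unitmxE unitfE; apply/negP => /det0P[v v_neq0 vA0].
have vT_neq0 : v^T != 0 by rewrite -(inj_eq trmx_inj) trmxK trmx0.
by have := A_pos _ vT_neq0; rewrite trmxK vA0 mul0mx mxE ltxx.
Qed.

Lemma posdef_convex A1 A2 t : posdef A1 -> posdef A2 -> 0 <= t <= 1 ->
  posdef (t *: A1 + (1 - t) *: A2).
Proof.
move=> [A1_sym A1_pos] [A2_sym A2_pos] /andP[t0 t1]; split.
  by rewrite linearD !linearZ /= A1_sym A2_sym.
move=> x x_neq0; have := A1_pos x x_neq0; have := A2_pos x x_neq0.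
rewrite mulmxDr mulmxDl -!scalemxAr -!scalemxAl !mxE.
nra.
Qed.

Lemma le_mxfrac A x q : posdef A -> 2 * vdot x q - vdot x (A *m x) <= mxfrac A q.
Proof.
move=> A_pd; set y := invmx A *m q.
have Ay : A *m y = q by rewrite mulKVmx // posdef_unitmx.
have yAx : vdot y (A *m x) = vdot x q.
  by rewrite vdot_mulmxr A_pd.1 Ay vdotC.
have := posdef_vdot_ge0 (x - y) A_pd.
rewrite mulmxBr Ay !(vdotDl, vdotDr, vdotNl, vdotNr) yAx (vdotC y q) /mxfrac -/y.
lra.
Qed.

Lemma mxfrac_argmaxE A q : A \in unitmx ->
  let x := invmx A *m q in mxfrac A q = 2 * vdot x q - vdot x (A *m x).
Proof. by move=> A_unit x; rewrite mulKVmx // /mxfrac -/x vdotC; ring. Qed.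

Lemma mxfrac_convex A1 A2 q1 q2 t : posdef A1 -> posdef A2 -> 0 <= t <= 1 ->
  mxfrac (t *: A1 + (1 - t) *: A2) (t *: q1 + (1 - t) *: q2)
  <= t * mxfrac A1 q1 + (1 - t) * mxfrac A2 q2.
Proof.
move=> A1_pd A2_pd t01; have /andP[t0 t1] := t01.
have t1' : 0 <= 1 - t by rewrite subr_ge0.
have A_unit := posdef_unitmx (posdef_convex A1_pd A2_pd t01).
rewrite mxfrac_argmaxE //; set x := invmx _ *m _.
have := ler_wpM2l t0 (le_mxfrac x q1 A1_pd).
have := ler_wpM2l t1' (le_mxfrac x q2 A2_pd).
rewrite mulmxDl -!scalemxAl !(vdotDr, vdotZr).
lra.
Qed.

End PositiveDefinite.

Section Energy.
Variables (R : realType) (d0 : measure_display) (T : measurableType d0).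
Variables (P : probability T R) (d K : nat) (xi : T -> 'rV[R]_d).
Variable phi : 'I_K -> 'rV[R]_d -> R.

Lemma PmatD (h1 h2 : 'cV[R]_K) :
  Pmat P xi phi (h1 + h2) = Pmat P xi phi h1 + Pmat P xi phi h2.
Proof. by rewrite /Pmat -big_split; apply: eq_bigr => k _; rewrite mxE scalerDl. Qed.

Lemma PmatZ a (h : 'cV[R]_K) : Pmat P xi phi (a *: h) = a *: Pmat P xi phi h.
Proof. by rewrite /Pmat scaler_sumr; apply: eq_bigr => k _; rewrite mxE scalerA. Qed.

Lemma energyE g (B h qx qy : 'cV[R]_K) :
  energy P xi phi g B h qx qy =
  2^-1 * (mxfrac (Pmat P xi phi h) qx + mxfrac (Pmat P xi phi h) qy)
  + 2^-1 * g * vdot h h + g * vdot h B.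
Proof. by []. Qed.

End Energy.

Theorem lemma3p2 (R : realType) (d0 : measure_display) (T : measurableType d0)
  (P : probability T R) (d K : nat) (xi : T -> 'rV[R]_d)
  (phi : 'I_K -> 'rV[R]_d -> R) (g : R) (B : 'cV[R]_K) :
  (* xi is a random variable in R^d *)
  (forall j : 'I_d, measurable_fun setT (fun w => xi w ord0 j)) ->
  (* finite moments of all orders *)
  (forall e : 'I_d -> nat,
      P.-integrable setT (fun w => (monomial e (xi w))%:E)) ->
  (* phi_1 = 1, the phi_k are polynomials, orthonormal in L^2 *)
  (0 < K)%N ->
  (forall k : 'I_K, val k = 0%N -> forall x, phi k x = 1) ->
  (forall k, is_polyfun (phi k)) ->
  (forall l m : 'I_K,
      Rintegral P setT (fun w => phi l (xi w) * phi m (xi w)) = (l == m)%:R) ->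
  0 < g ->
  (* E is convex on the convex set {U | P(h) positive definite} *)
  forall (h1 qx1 qy1 h2 qx2 qy2 : 'cV[R]_K) (t : R),
    posdef (Pmat P xi phi h1) -> posdef (Pmat P xi phi h2) ->
    0 <= t <= 1 ->
    energy P xi phi g B (t *: h1 + (1 - t) *: h2)
                         (t *: qx1 + (1 - t) *: qx2)
                         (t *: qy1 + (1 - t) *: qy2)
    <= t * energy P xi phi g B h1 qx1 qy1
       + (1 - t) * energy P xi phi g B h2 qx2 qy2.
Proof.
(* Only the linearity of [Pmat] matters. *)
move=> _ _ _ _ _ _ g_gt0 h1 qx1 qy1 h2 qx2 qy2 t P1_pd P2_pd t01.
rewrite !energyE PmatD !PmatZ.
have Fx := mxfrac_convex qx1 qx2 P1_pd P2_pd t01.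
have Fy := mxfrac_convex qy1 qy2 P1_pd P2_pd t01.
have := ler_wpM2l (ltW g_gt0) (vdotxx_convex h1 h2 t01).
rewrite [vdot _ B]vdotDl !vdotZl.
lra.
Qed.
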